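(* Let $\beta>0$, $0<c<1$, $M\ge1$ and $\mathcal{D}=\{d_1<\cdots<d_M\}$ a set of positive integers. Then $\check{P}_{\mathcal{D},0}(x;\beta,c)=\check{\Xi}_{\mathcal{D}}(x;\beta+1,c)$, and for every $n\geq 1$ the multi-indexed Meixner polynomials satisfy the forward and backward shift relations $$\frac{c(\beta+M)}{\check{\Xi}_{\mathcal{D}}(x+1;\beta,c)}\Bigl(\check{\Xi}_{\mathcal{D}}(x+1;\beta+1,c)\check{P}_{\mathcal{D},n}(x;\beta,c)-\check{\Xi}_{\mathcal{D}}(x;\beta+1,c)\check{P}_{\mathcal{D},n}(x+1;\beta,c)\Bigr)=(1-c)n\,\check{P}_{\mathcal{D},n-1}(x;\beta+1,c),$$ $$\frac{c(x+\beta+M)\check{\Xi}_{\mathcal{D}}(x;\beta,c)\check{P}_{\mathcal{D},n-1}(x;\beta+1,c)-x\,\check{\Xi}_{\mathcal{D}}(x+1;\beta,c)\check{P}_{\mathcal{D},n-1}(x-1;\beta+1,c)}{c(\beta+M)\,\check{\Xi}_{\mathcal{D}}(x;\beta+1,c)}=\check{P}_{\mathcal{D},n}(x;\beta,c).$$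
   Context: $(a)_k$ denotes the Pochhammer symbol. For $n\in\mathbb{Z}_{\ge0}$, $\check{P}_n(x;\beta,c)={}_2F_1(-n,-x;\beta;1-c^{-1})=\sum_{k=0}^{n}\frac{(-n)_k(-x)_k}{(\beta)_k k!}(1-c^{-1})^k$ (Meixner polynomial, normalised by $\check P_n(0)=1$), and $\check{\xi}_{\mathrm{v}}(x;\beta,c)={}_2F_1(-\mathrm{v},-x;\beta;1-c)$. The Casoratian is $\mathrm{W}_{\mathrm{C}}[f_1,\dots,f_k](x)=\det\bigl(f_l(x+j-1)\bigr)_{1\le j,l\le k}$. For parameters $(\beta,c)$ put $\mathcal{C}_{\mathcal{D}}(\beta,c)=\prod_{1\le j<k\le M}\frac{(1-c)(d_k-d_j)}{\beta+j-1}$, $\tilde d_{\mathcal{D},n}(\beta,c)^2=\prod_{j=1}^M\frac{(1-c)(n+d_j+\beta)}{\beta+j-1}$, $\mathcal{C}_{\mathcal{D},n}(\beta,c)=(-1)^M\mathcal{C}_{\mathcal{D}}(\beta,c)\tilde d_{\mathcal{D},n}(\beta,c)^2$, and define $\check{\Xi}_{\mathcal{D}}(x;\beta,c)=\mathcal{C}_{\mathcal{D}}(\beta,c)^{-1}\mathrm{W}_{\mathrm{C}}[\check{\xi}_{d_1},\dots,\check{\xi}_{d_M}](x)$, $\check{P}_{\mathcal{D},n}(x;\beta,c)=\mathcal{C}_{\mathcal{D},n}(\beta,c)^{-1}c^{-x}\mathrm{W}_{\mathrm{C}}[\check{\xi}_{d_1},\dots,\check{\xi}_{d_M},c^{x}\check{P}_n](x)$,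 all functions carrying the parameters $(\beta,c)$; the objects with parameters $(\beta+1,c)$ are defined by the same formulas with $\beta\to\beta+1$. *)

From HB Require Import structures.
From mathcomp Require Import all_boot all_order all_algebra.
From mathcomp Require Import reals exp.
Set Implicit Arguments. Unset Strict Implicit. Unset Printing Implicit Defensive.
Import Order.TTheory GRing.Theory Num.Theory.
Local Open Scope ring_scope.

Section MeixnerDefs.
Variable R : realType.

Definition poch (a : R) (k : nat) : R := \prod_(i < k) (a + i%:R).

Definition Pm (n : nat) (x beta c : R) : R :=
  \sum_(k < n.+1) poch (- n%:R) k * poch (- x) k / (poch beta k * (k`!)%:R)
     * (1 - c^-1) ^+ k.

Definition xiv (v : nat) (x beta c : R) : R :=
  \sum_(k < v.+1) poch (- v%:R) k * poch (- x) k / (poch beta k * (k`!)%:R)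
     * (1 - c) ^+ k.

Definition casoratian (k : nat) (f : 'I_k -> R -> R) (x : R) : R :=
  \det (\matrix_(j < k, l < k) f l (x + j%:R)).

(* D = {d_0 < ... < d_{M-1}} given by d : nat -> nat (only d 0..d (M-1) matter);
   indices are shifted by one w.r.t. the paper (paper's d_j is d (j-1)). *)
Definition CD (M : nat) (d : nat -> nat) (beta c : R) : R :=
  \prod_(k < M) \prod_(j < k)
     ((1 - c) * ((d k)%:R - (d j)%:R) / (beta + j%:R)).

Definition dtilde2 (M : nat) (d : nat -> nat) (n : nat) (beta c : R) : R :=
  \prod_(j < M) ((1 - c) * (n%:R + (d j)%:R + beta) / (beta + j%:R)).

Definition CDn (M : nat) (d : nat -> nat) (n : nat) (beta c : R) : R :=
  (-1) ^+ M * CD M d beta c * dtilde2 M d n beta c.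

Definition XiD (M : nat) (d : nat -> nat) (x beta c : R) : R :=
  (CD M d beta c)^-1 *
  casoratian (fun l : 'I_M => fun y => xiv (d l) y beta c) x.

Definition PDn (M : nat) (d : nat -> nat) (n : nat) (x beta c : R) : R :=
  (CDn M d n beta c)^-1 * powR c (- x) *
  casoratian (fun l : 'I_M.+1 => fun y =>
      if (l < M)%N then xiv (d l) y beta c else powR c y * Pm n y beta c) x.

End MeixnerDefs.

From HB Require Import structures.
From mathcomp Require Import all_boot all_order all_algebra.
From mathcomp Require Import reals exp.
From mathcomp Require Import ring zify.
Import Order.TTheory GRing.Theory Num.Theory.
Local Open Scope ring_scope.
Set Implicit Arguments. Unset Strict Implicit. Unset Printing Implicit Defensive.

(* The functions [xi_v(x; beta)], [c^x P_n(x; beta)] and [c^x] all solve the same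
   second-order Meixner difference equation, and the contiguity relations of the
   terminating 2F1 show that [f(x+1) - c f(x)] turns each of them into its analogue
   at [beta + 1] (with [P_n] lowered to [P_(n-1)]).  Subtracting [c] times each row of
   a Casoratian from the next one thus reduces a Casoratian ending in [c^x] to one of
   parameter [beta + 1]: this gives [P_(D,0) = Xi_D(beta + 1)], and identifies the
   (M+2)-Casoratian of [xi_(d_1), ..., xi_(d_M), c^x P_n, c^x] with [P_(D,n-1)(beta + 1)].
   The forward shift is then the Desnanot-Jacobi identity for that Casoratian, and the
   backward shift the identity obtained by applying the difference equation to the
   cofactors of its last row and solving with Cramer's rule. *)

Section Hypergeometric.
Variable R : realType.
Implicit Types (a y b z : R) (k v : nat).

Lemma poch0 a : poch a 0 = 1.
Proof. by rewrite /poch big_ord0. Qed.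

Lemma pochSr a k : poch a k.+1 = poch a k * (a + k%:R).
Proof. by rewrite /poch big_ord_recr. Qed.

Lemma pochSl a k : poch a k.+1 = a * poch (a + 1) k.
Proof.
rewrite /poch big_ord_recl addr0; congr (_ * _); apply: eq_bigr => i _.
by rewrite /= -natr1; ring.
Qed.

Lemma pochB1 a k : poch (a - 1) k.+1 = poch a k.+1 - k.+1%:R * poch a k.
Proof. by rewrite pochSl pochSr subrK -natr1; ring. Qed.

Lemma poch_oppn v : poch (- v%:R) v.+1 = 0 :> R.
Proof. by rewrite pochSr addNr mulr0. Qed.

Lemma poch_gt0 b k : 0 < b -> 0 < poch b k.
Proof.
move=> b_gt0; apply: prodr_gt0 => i _.
by apply: (lt_le_trans b_gt0); rewrite lerDl.
Qed.

Lemma natr_fact_neq0 k : k`!%:R != 0 :> R.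
Proof. by rewrite pnatr_eq0 -lt0n fact_gt0. Qed.

Definition hgeom v y b z : R :=
  \sum_(k < v.+1) poch (- v%:R) k * poch (- y) k / (poch b k * k`!%:R) * z ^+ k.

Lemma hgeom0 y b z : hgeom 0 y b z = 1.
Proof. by rewrite /hgeom big_ord1 !poch0 fact0 expr0 !mulr1 mul1r invr1. Qed.

Lemma hgeomE v y b z : hgeom v y b z =
  \sum_(k < v.+2) poch (- v%:R) k * poch (- y) k / (poch b k * k`!%:R) * z ^+ k.
Proof. by rewrite [RHS]big_ord_recr /= poch_oppn !mul0r addr0. Qed.

Variables (b z : R).
Hypothesis b_gt0 : 0 < b.

Let b_neq0 : b != 0. Proof. by rewrite gt_eqF. Qed.
Let b1_gt0 : 0 < b + 1. Proof. by rewrite ltr_wpDr. Qed.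
Let poch_b1_neq0 k : poch (b + 1) k != 0. Proof. by rewrite gt_eqF ?poch_gt0. Qed.
Let b1k_neq0 k : b + 1 + k%:R != 0. Proof. by rewrite gt_eqF ?ltr_wpDr. Qed.

Lemma hgeom_diff v y :
  hgeom v.+1 (y + 1) b z - hgeom v.+1 y b z = v.+1%:R * z / b * hgeom v y (b + 1) z.
Proof.
rewrite /hgeom -sumrB big_ord_recl !poch0 subrr add0r mulr_sumr.
apply: eq_bigr => k _ /=.
have -> : poch (- (y + 1)) k.+1 = poch (- y) k.+1 - k.+1%:R * poch (- y) k.
  by rewrite -pochB1 opprD.
rewrite (pochSl (- v.+1%:R)) (pochSl b) factS natrM exprS.
have -> : - v.+1%:R + 1 = - v%:R :> R by rewrite -natr1; ring.
by field; rewrite nat1r natr_fact_neq0 poch_b1_neq0 b_neq0 pnatr_eq0.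
Qed.

Lemma hgeom_contiguous v y :
  b * hgeom v.+1 y b z + v.+1%:R * hgeom v y (b + 1) z
  = (v.+1%:R + b) * hgeom v.+1 y (b + 1) z.
Proof.
rewrite (hgeomE v) /hgeom !mulr_sumr -big_split /=.
apply: eq_bigr => -[[|k] ?] _; first by rewrite !poch0 fact0 expr0; field.
rewrite (pochSl (- v.+1%:R)) (pochSr (- v%:R)) (pochSl b) (pochSr (b + 1)).
have -> : - v.+1%:R + 1 = - v%:R :> R by rewrite -natr1; ring.
by field; rewrite natr_fact_neq0 poch_b1_neq0 b_neq0 b1k_neq0.
Qed.

Lemma hgeom_lower v y :
  (y + b) * hgeom v y (b + 1) z - y * hgeom v (y - 1) (b + 1) z = b * hgeom v y b z.
Proof.
rewrite /hgeom !mulr_sumr -sumrB; apply: eq_bigr => -[[|k] ?] _.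
  by rewrite !poch0 fact0 expr0; field.
rewrite (pochSl (- y)) (pochSr (- (y - 1))) (pochSl b) (pochSr (b + 1)).
have -> : - (y - 1) = - y + 1 by ring.
by field; rewrite natr_fact_neq0 poch_b1_neq0 b_neq0 b1k_neq0.
Qed.

Lemma hgeom_raise v y :
  hgeom v (y + 1) b z - (1 - z) * hgeom v y b z = z * (v%:R + b) / b * hgeom v y (b + 1) z.
Proof.
case: v => [|v]; first by rewrite !hgeom0; field.
transitivity (hgeom v.+1 (y + 1) b z - hgeom v.+1 y b z + z * hgeom v.+1 y b z).
  by ring.
rewrite hgeom_diff.
transitivity (z / b * (b * hgeom v.+1 y b z + v.+1%:R * hgeom v y (b + 1) z)).
  by field.
by rewrite hgeom_contiguous; field.
Qed.

Lemma hgeom_diff_eq v y :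
  (y + b) * hgeom v (y + 1) b z - ((1 - z) * (y + b) + y) * hgeom v y b z
  + (1 - z) * y * hgeom v (y - 1) b z = z * (v%:R + b) * hgeom v y b z.
Proof.
have raise_y1 := hgeom_raise v (y - 1); rewrite subrK in raise_y1.
transitivity ((y + b) * (hgeom v (y + 1) b z - (1 - z) * hgeom v y b z)
              - y * (hgeom v y b z - (1 - z) * hgeom v (y - 1) b z)); first by ring.
rewrite hgeom_raise raise_y1.
transitivity (z * (v%:R + b) / b *
  ((y + b) * hgeom v y (b + 1) z - y * hgeom v (y - 1) (b + 1) z)); first by ring.
by rewrite hgeom_lower; field.
Qed.

End Hypergeometric.

Lemma bump_lt h i : (i < h)%N -> bump h i = i.
Proof. by move=> lt_ih; rewrite /bump leqNgt lt_ih. Qed.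

Lemma bumpnn h : bump h h = h.+1.
Proof. by rewrite /bump leqnn. Qed.

Section Casoratian.
Variable R : comNzRingType.
Implicit Types (f g : nat -> R -> R) (x y q : R).

Definition casmx m f x : 'M[R]_m := \matrix_(j < m, l < m) f l (x + j%:R).

Lemma eq_casmx m f g x : (forall l, (l < m)%N -> f l =1 g l) -> casmx m f x = casmx m g x.
Proof. by move=> fg; apply/matrixP => j l; rewrite !mxE fg. Qed.

Lemma casmx_bump m f x : casmx m (f \o bump m) x = casmx m f x.
Proof. by apply: eq_casmx => l lt_lm y; rewrite /= bump_lt. Qed.

Lemma col'_casmx_bump m f x :
  col' ord_max (casmx m.+1 (f \o bump m) x) = col' ord_max (casmx m.+1 f x).
Proof. by apply/matrixP => j l; rewrite !mxE /= !(@bump_lt m l). Qed.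

Lemma minor_casmx_max m f x i :
  row' ord_max (col' i (casmx m.+1 f x)) = casmx m (f \o bump i) x.
Proof. by apply/matrixP => j l; rewrite !mxE lift_max. Qed.

Lemma minor_casmx0 m f x i :
  row' ord0 (col' i (casmx m.+1 f x)) = casmx m (f \o bump i) (x + 1).
Proof.
by apply/matrixP => j l; rewrite !mxE lift0 /= -natr1 addrA addrAC.
Qed.

Lemma cofactor_casmx_max m f x :
  cofactor (casmx m.+1 f x) ord_max ord_max = \det (casmx m f x).
Proof.
by rewrite /cofactor minor_casmx_max casmx_bump -signr_odd addnn odd_double mul1r.
Qed.

Lemma cofactor_casmx0 m f x :
  cofactor (casmx m.+1 f x) ord0 ord_max = (-1) ^+ m * \det (casmx m f (x + 1)).
Proof. by rewrite /cofactor minor_casmx0 casmx_bump. Qed.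

Lemma det_casmx_scale m (k : nat -> R) f x :
  \det (casmx m (fun l y => k l * f l y) x) = \prod_(l < m) k l * \det (casmx m f x).
Proof.
have -> : casmx m (fun l y => k l * f l y) x = casmx m f x *m diag_mx (\row_(l < m) k l).
  by apply/matrixP => i j; rewrite mul_mx_diag !mxE mulrC.
by rewrite det_mulmx det_diag mulrC; congr (_ * _); apply: eq_bigr => l _; rewrite mxE.
Qed.

(* Subtracting [q] times each row from the next one is a unitriangular row operation. *)
Lemma det_casmx_subr m f q x : \det (casmx m f x) =
  \det (\matrix_(r < m, l < m)
          (f l (x + r%:R) - q * (if (r : nat) is r'.+1 then f l (x + r'%:R) else 0))).
Proof.
pose T : 'M[R]_m := \matrix_(i, j) (((i : nat) == j)%:R - q * ((i : nat) == j.+1)%:R).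
have detT : \det T = 1.
  rewrite det_trig; last first.
    apply/is_trig_mxP => i j lt_ij; rewrite mxE.
    have [-> ->] : ((i : nat) == j) = false /\ ((i : nat) == j.+1) = false by split; lia.
    by rewrite mulr0 subr0.
  by rewrite big1 // => i _; rewrite mxE eqxx ltn_eqF // mulr0 subr0.
have -> : \det (casmx m f x) = \det (T *m casmx m f x) by rewrite det_mulmx detT mul1r.
congr (\det _); apply/matrixP => r l.
rewrite !mxE (bigD1 r) //= mxE eqxx ltn_eqF // mulr0 subr0 mul1r mxE.
congr (_ + _); case: r => [[|r] lt_rm] /=.
  rewrite mulr0 oppr0 big1 // => i ne_i0; rewrite mxE.
  have [-> ->] : (0 == i :> nat) = false /\ (0 == i.+1)%N = false.
    by move: ne_i0; rewrite -val_eqE /=; split; lia.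
  by rewrite mulr0 subr0 mul0r.
rewrite (bigD1 (Ordinal (ltnW lt_rm))) /=; last by rewrite -val_eqE /=; lia.
rewrite big1 ?addr0 => [|i /andP [ne_ir ne_ir']]; rewrite !mxE /=.
  by rewrite eqxx gtn_eqF //= mulr1 sub0r mulNr.
have [-> ->] : (r.+1 == i :> nat) = false /\ (r.+1 == i.+1)%N = false.
  by move: ne_ir ne_ir'; rewrite -!val_eqE /=; split; lia.
by rewrite mulr0 subr0 mul0r.
Qed.

Lemma det_casmx_geom m f q x : (forall y, f m (y + 1) = q * f m y) ->
  \det (casmx m.+1 f x)
  = (-1) ^+ m * f m x * \det (casmx m (fun l y => f l (y + 1) - q * f l y) x).
Proof.
move=> f_geom; rewrite (@det_casmx_subr _ _ q) (expand_det_col _ ord_max) big_ord_recl.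
rewrite big1 ?addr0 => [|i _]; last first.
  by rewrite !mxE /= /bump /= add1n -natr1 addrA f_geom subrr mul0r.
rewrite !mxE /= mulr0 subr0 addr0 /cofactor add0n mulrCA mulrA; congr (_ * \det _).
by apply/matrixP => j l; rewrite !mxE /= bump_lt // add0n /bump add1n -natr1 addrA.
Qed.

(* Cramer's rule, read off one entry of [adj Q * (Q v) = det Q * v]. *)
Lemma cramer_entry p (Q : 'M[R]_p) (v : 'I_p -> R) i :
  \det Q * v i = \sum_j cofactor Q j i * \sum_l Q j l * v l.
Proof.
pose vc : 'cV[R]_p := \col_l v l.
have := congr1 (fun A : 'M_(p, 1) => A i 0) (mulmxA (\adj Q) Q vc).
rewrite mul_adj_mx mul_scalar_mx !mxE => <-.
by apply: eq_bigr => j _; rewrite !mxE; congr (_ * _); apply: eq_bigr => l _; rewrite mxE.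
Qed.

Lemma big_ord_bump m (F : nat -> R) :
  \sum_(i < m.+2) F i = F m + \sum_(l < m.+1) F (bump m l).
Proof. by rewrite (bigD1_ord (inord m)) //= inordK. Qed.

Lemma addr1_natr y j : y + 1 + j%:R = y + j.+1%:R.
Proof. by rewrite addrAC -addrA natr1. Qed.

Definition cascof m f x i : R := (-1) ^+ (m.+1 + i) * \det (casmx m.+1 (f \o bump i) x).

Lemma cofactor_casmx_row m f x (i : 'I_m.+2) :
  cofactor (casmx m.+2 f x) ord_max i = cascof m f x i.
Proof. by rewrite /cofactor minor_casmx_max. Qed.

Lemma cascof_max m f x : cascof m f x m.+1 = \det (casmx m.+1 f x).
Proof. by rewrite /cascof casmx_bump -signr_odd addnn odd_double mul1r. Qed.

Lemma cascof_bump m f x : cascof m f x m = - \det (casmx m.+1 (f \o bump m) x).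
Proof. by rewrite /cascof -signr_odd addSn /= addnn odd_double mulN1r. Qed.

Lemma casmx_cascof m f x j : (j <= m.+1)%N ->
  \sum_(i < m.+2) f i (x + j%:R) * cascof m f x i = (j == m.+1)%:R * \det (casmx m.+2 f x).
Proof.
move=> le_jm; have := congr1 (fun A : 'M_m.+2 => A (inord j) ord_max) (mul_mx_adj (casmx m.+2 f x)).
rewrite !mxE -val_eqE /= inordK // mulr_natl => <-.
by apply: eq_bigr => i _; rewrite !mxE inordK // cofactor_casmx_row.
Qed.

Lemma det_casmx_pred m f x : \det (casmx m.+2 f (x - 1))
  = (-1) ^+ m.+1 * \sum_(i < m.+2) f i (x - 1) * cascof m f x i.
Proof.
rewrite (expand_det_row _ ord0) mulr_sumr; apply: eq_bigr => i _.
by rewrite mxE addr0 /cofactor minor_casmx0 subrK /cascof add0n exprD -mulrA [RHS]mulrCA signrMK.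
Qed.

Lemma expand_casmx_bump m f x :
  \sum_(j < m.+1) f m (x + j%:R) * cofactor (casmx m.+1 (f \o bump m) x) j ord_max
  = \det (casmx m.+1 f x).
Proof.
rewrite (expand_det_col _ ord_max); apply: eq_bigr => j _.
by rewrite mxE /cofactor col'_casmx_bump.
Qed.

Lemma desnanot_jacobi_casmx m f x :
  \det (casmx m.+1 (f \o bump m) (x + 1)) * \det (casmx m.+1 f x)
  = \det (casmx m.+1 (f \o bump m) x) * \det (casmx m.+1 f (x + 1))
    + \det (casmx m f (x + 1)) * \det (casmx m.+2 f x).
Proof.
pose Q := casmx m.+1 (f \o bump m) (x + 1).
have Qv (j : 'I_m.+1) : \sum_l Q j l * cascof m f x (bump m l)
    = (j == ord_max)%:R * \det (casmx m.+2 f x) - f m (x + j.+1%:R) * cascof m f x m.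
  rewrite -val_eqE /= -eqSS -casmx_cascof //.
  rewrite (big_ord_bump m (fun i => f i (x + j.+1%:R) * cascof m f x i)) addrC addKr.
  by apply: eq_bigr => l _; rewrite mxE addr1_natr.
have := cramer_entry Q (fun l => cascof m f x (bump m l)) ord_max.
rewrite /= bumpnn cascof_max => ->.
under eq_bigr do rewrite Qv mulrBr.
rewrite sumrB (bigD1 ord_max) //= big1 ?addr0 => [|j /negPf ->]; last by rewrite mul0r mulr0.
have -> : \sum_j cofactor Q j ord_max * (f m (x + j.+1%:R) * cascof m f x m)
    = \det (casmx m.+1 f (x + 1)) * cascof m f x m.
  by rewrite -expand_casmx_bump mulr_suml; apply: eq_bigr => j _; rewrite addr1_natr; ring.
by rewrite eqxx mul1r cofactor_casmx_max casmx_bump cascof_bump; ring.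
Qed.

Lemma cramer_casmx_bump m f (lam : nat -> R) x :
  \det (casmx m.+1 (f \o bump m) x) * ((lam m.+1 - lam m) * \det (casmx m.+1 f x))
  = \sum_(j < m.+1) cofactor (casmx m.+1 (f \o bump m) x) j ord_max
      * \sum_(i < m.+2) lam i * f i (x + j%:R) * cascof m f x i.
Proof.
have := cramer_entry (casmx m.+1 (f \o bump m) x)
          (fun l => (lam (bump m l) - lam m) * cascof m f x (bump m l)) ord_max.
rewrite /= bumpnn cascof_max => ->; apply: eq_bigr => j _; congr (_ * _).
pose F i := (lam i - lam m) * f i (x + j%:R) * cascof m f x i.
transitivity (\sum_(i < m.+2) F i).
  rewrite big_ord_bump /F subrr !mul0r add0r.
  by apply: eq_bigr => l _; rewrite mxE /=; ring.
have := casmx_cascof f x (ltnW (ltn_ord j)); rewrite (ltn_eqF (ltn_ord j)) mul0r => S0.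
transitivity (\sum_(i < m.+2) lam i * f i (x + j%:R) * cascof m f x i
              - lam m * \sum_(i < m.+2) f i (x + j%:R) * cascof m f x i).
  by rewrite mulr_sumr -sumrB; apply: eq_bigr => i _; rewrite /F; ring.
by rewrite S0 mulr0 subr0.
Qed.

Lemma casmx_diff_eq m f (lam : nat -> R) b q x : (0 < m)%N ->
  (forall i y, (y + b) * f i (y + 1) - (y + b + q * y) * f i y + q * y * f i (y - 1)
               = lam i * f i y) ->
  (x + b + m%:R) * \det (casmx m f x) * \det (casmx m.+2 f x)
  - q * x * \det (casmx m f (x + 1)) * \det (casmx m.+2 f (x - 1))
  = (lam m.+1 - lam m) * \det (casmx m.+1 f x) * \det (casmx m.+1 (f \o bump m) x).
Proof.
move=> m_gt0 f_diff_eq.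
(* [S y] is the determinant of [casmx m.+2 f x] with its last row replaced by [f _ y]. *)
pose S y := \sum_(i < m.+2) f i y * cascof m f x i.
have S0 j : (j <= m)%N -> S (x + j%:R) = 0.
  by move=> le_jm; rewrite /S casmx_cascof ?leqW // ltn_eqF ?mul0r.
have S1 : S (x + 1) = 0 := S0 1%N m_gt0.
have Sx : S x = 0 by have := S0 0%N (leq0n m); rewrite addr0.
have Sm : S (x + m%:R) = 0 := S0 m (leqnn m).
have Sm1 : S (x + m%:R - 1) = 0.
  by rewrite -[in x + m%:R](prednK m_gt0) -natr1 addrA addrK S0 // leq_pred.
have Sm2 : S (x + m%:R + 1) = \det (casmx m.+2 f x).
  by rewrite -addrA natr1 /S casmx_cascof // eqxx mul1r.
have S_pred : S (x - 1) = (-1) ^+ m.+1 * \det (casmx m.+2 f (x - 1)).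
  by rewrite det_casmx_pred mulrA -expr2 sqrr_sign mul1r.
have L_eq y : \sum_(i < m.+2) lam i * f i y * cascof m f x i
              = (y + b) * S (y + 1) - (y + b + q * y) * S y + q * y * S (y - 1).
  rewrite /S !mulr_sumr -sumrB -big_split /=; apply: eq_bigr => i _.
  by rewrite -f_diff_eq; ring.
rewrite [RHS]mulrC cramer_casmx_bump.
have ne0m : ord0 != ord_max :> 'I_m.+1 by rewrite -val_eqE /=; lia.
rewrite (bigD1 ord0) // (bigD1 ord_max) 1?eq_sym //= [X in _ + (_ + X)]big1 => [|j].
  rewrite addr0 cofactor_casmx0 cofactor_casmx_max !casmx_bump !L_eq.
  rewrite addr0 S1 Sx Sm Sm1 Sm2 S_pred.
  by rewrite -[(-1) ^+ m]signr_odd -[(-1) ^+ m.+1]signr_odd /=; case: (odd m); ring.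
case: j => -[|j] lt_jm //; rewrite -!val_eqE /= => ne_jm.
rewrite L_eq.
have -> : x + j.+1%:R + 1 = x + j.+2%:R by rewrite -addrA natr1.
have -> : x + j.+1%:R - 1 = x + j%:R by rewrite -natr1 addrA addrK.
by rewrite !S0 ?(mulr0, subrr, addr0) //; lia.
Qed.

End Casoratian.

Lemma eq_of_subr_mul (R : pzRingType) (a b k l r : R) :
  a = b -> l - r = k * (a - b) -> l = r.
Proof. by move=> -> /eqP; rewrite subrr mulr0 subr_eq0 => /eqP. Qed.

Lemma prod_shift_ratio (R : numFieldType) (a : R) k : 0 < a ->
  \prod_(j < k) ((a + 1 + j%:R) / (a + j%:R)) = (a + k%:R) / a.
Proof.
move=> a_gt0; elim: k => [|k IHk]; first by rewrite big_ord0 addr0 divff ?gt_eqF.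
rewrite big_ord_recr /= IHk -natr1.
by field; rewrite !gt_eqF ?ltr_wpDr.
Qed.

Section Meixner.
Variable R : realType.
Variables (b c : R) (M : nat) (d : nat -> nat).
Hypotheses (b_gt0 : 0 < b) (c_gt0 : 0 < c) (c_lt1 : c < 1).
Implicit Types (n v : nat) (x y : R).

Let b_neq0 : b != 0. Proof. by rewrite gt_eqF. Qed.
Let c_neq0 : c != 0. Proof. by rewrite gt_eqF. Qed.
Let b1_gt0 : 0 < b + 1. Proof. by rewrite ltr_wpDr. Qed.
Let subKc : 1 - (1 - c) = c. Proof. by rewrite opprB addrC subrK. Qed.
Let subKcV : 1 - (1 - c^-1) = c^-1. Proof. by rewrite opprB addrC subrK. Qed.

Lemma powR_addr1 y : powR c (y + 1) = powR c y * c.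
Proof. by rewrite powRD ?powRr1 ?(ltW c_gt0) //; apply/implyP. Qed.

Lemma powR_subr1 y : powR c (y - 1) = powR c y / c.
Proof. by rewrite powRB ?powRr1 ?(ltW c_gt0) //; apply/implyP. Qed.

Lemma powR_neq0 y : powR c y != 0.
Proof. by rewrite gt_eqF ?powR_gt0. Qed.

Lemma xivE v y (b' : R) : xiv v y b' c = hgeom v y b' (1 - c). Proof. by []. Qed.
Lemma PmE n y (b' : R) : Pm n y b' c = hgeom n y b' (1 - c^-1). Proof. by []. Qed.

Lemma xiv_diff_eq v y :
  (y + b) * xiv v (y + 1) b c - (y + b + c * y) * xiv v y b c + c * y * xiv v (y - 1) b c
  = v%:R * (1 - c) * xiv v y b c.
Proof.
have := hgeom_diff_eq (1 - c) b_gt0 v y; rewrite !xivE subKc => diff_eq.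
transitivity ((y + b) * hgeom v (y + 1) b (1 - c) - (c * (y + b) + y) * hgeom v y b (1 - c)
  + c * y * hgeom v (y - 1) b (1 - c) - b * (1 - c) * hgeom v y b (1 - c)); first by ring.
by rewrite diff_eq; ring.
Qed.

Lemma powR_Pm_diff_eq n y :
  (y + b) * (powR c (y + 1) * Pm n (y + 1) b c) - (y + b + c * y) * (powR c y * Pm n y b c)
  + c * y * (powR c (y - 1) * Pm n (y - 1) b c)
  = - ((n%:R + b) * (1 - c)) * (powR c y * Pm n y b c).
Proof.
have := hgeom_diff_eq (1 - c^-1) b_gt0 n y.
rewrite !PmE powR_addr1 powR_subr1 subKcV => diff_eq.
transitivity (c * powR c y * ((y + b) * hgeom n (y + 1) b (1 - c^-1)
  - (c^-1 * (y + b) + y) * hgeom n y b (1 - c^-1) + c^-1 * y * hgeom n (y - 1) b (1 - c^-1))).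
  by field.
by rewrite diff_eq; field.
Qed.

Lemma powR_diff_eq y :
  (y + b) * powR c (y + 1) - (y + b + c * y) * powR c y + c * y * powR c (y - 1)
  = - (b * (1 - c)) * powR c y.
Proof. by rewrite powR_addr1 powR_subr1; field. Qed.

Lemma xiv_raise v y :
  xiv v (y + 1) b c - c * xiv v y b c = (1 - c) * (v%:R + b) / b * xiv v y (b + 1) c.
Proof. by have := hgeom_raise (1 - c) b_gt0 v y; rewrite !xivE subKc. Qed.

Lemma powR_Pm_raise n y :
  powR c (y + 1) * Pm n.+1 (y + 1) b c - c * (powR c y * Pm n.+1 y b c)
  = (c - 1) * n.+1%:R / b * (powR c y * Pm n y (b + 1) c).
Proof.
have := hgeom_diff (1 - c^-1) b_gt0 n y; rewrite !PmE powR_addr1 => diff.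
transitivity (c * powR c y * (hgeom n.+1 (y + 1) b (1 - c^-1) - hgeom n.+1 y b (1 - c^-1))).
  by ring.
by rewrite diff; field; rewrite b_neq0 c_neq0.
Qed.

Definition xi_fam (b' : R) : nat -> R -> R := fun l y => xiv (d l) y b' c.

Definition meixner_fam n (b' : R) : nat -> R -> R :=
  fun l y => if (l < M)%N then xiv (d l) y b' c else powR c y * Pm n y b' c.

Definition ext_fam n : nat -> R -> R :=
  fun l y => if (l <= M)%N then meixner_fam n b l y else powR c y.

Definition ext_eigen n l : R :=
  if (l < M)%N then (d l)%:R * (1 - c)
  else if l == M then - ((n%:R + b) * (1 - c)) else - (b * (1 - c)).

Lemma ext_fam_diff_eq n l y :
  (y + b) * ext_fam n l (y + 1) - (y + b + c * y) * ext_fam n l y + c * y * ext_fam n l (y - 1)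
  = ext_eigen n l * ext_fam n l y.
Proof.
rewrite /ext_fam /meixner_fam /ext_eigen leq_eqVlt.
case: ltngtP => _ //=; [exact: xiv_diff_eq | exact: powR_diff_eq | exact: powR_Pm_diff_eq].
Qed.

Lemma casmx_ext_fam n y : casmx M (ext_fam n) y = casmx M (xi_fam b) y.
Proof. by apply: eq_casmx => l lt_lM z; rewrite /ext_fam /meixner_fam (ltnW lt_lM) lt_lM. Qed.

Lemma casmx_ext_famS n y : casmx M.+1 (ext_fam n) y = casmx M.+1 (meixner_fam n b) y.
Proof. by apply: eq_casmx => l le_lM z; rewrite /ext_fam -ltnS le_lM. Qed.

Lemma casmx_ext_fam_bump n y :
  casmx M.+1 (ext_fam n \o bump M) y = casmx M.+1 (meixner_fam 0 b) y.
Proof.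
apply: eq_casmx => l; rewrite ltnS leq_eqVlt => /orP [/eqP -> | lt_lM] z /=.
  by rewrite bumpnn /ext_fam /meixner_fam ltnn PmE hgeom0 mulr1.
by rewrite bump_lt // /ext_fam (ltnW lt_lM) /meixner_fam lt_lM.
Qed.

Hypothesis d_incr : forall i j : nat, (i < j)%N -> (j < M)%N -> (d i < d j)%N.

Let c1_gt0 : 0 < 1 - c. Proof. by rewrite subr_gt0. Qed.
Let addr_nat_gt0 (b' : R) j : 0 < b' -> 0 < b' + j%:R. Proof. exact: ltr_wpDr. Qed.

Lemma CD_gt0 (b' : R) : 0 < b' -> 0 < CD M d b' c.
Proof.
move=> b'_gt0; apply: prodr_gt0 => k _; apply: prodr_gt0 => j _.
by rewrite divr_gt0 ?mulr_gt0 ?addr_nat_gt0 // subr_gt0 ltr_nat (d_incr (ltn_ord j)).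
Qed.

Lemma dtilde2_gt0 n (b' : R) : 0 < b' -> 0 < dtilde2 M d n b' c.
Proof.
move=> b'_gt0; apply: prodr_gt0 => j _.
by rewrite divr_gt0 ?mulr_gt0 ?addr_nat_gt0 // ltr_wpDl ?addr_ge0.
Qed.

Lemma CDn_neq0 n (b' : R) : 0 < b' -> CDn M d n b' c != 0.
Proof. by move=> b'_gt0; rewrite !mulf_neq0 ?signr_eq0 ?gt_eqF ?CD_gt0 ?dtilde2_gt0. Qed.

Lemma dtilde2_shift n : dtilde2 M d n.+1 b c = dtilde2 M d n (b + 1) c * ((b + M%:R) / b).
Proof.
rewrite /dtilde2 -prod_shift_ratio // -big_split; apply: eq_bigr => j _.
by rewrite /= -natr1; field; rewrite !gt_eqF ?addr_nat_gt0.
Qed.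

Definition raise_coef l : R := (1 - c) * ((d l)%:R + b) / b.

Lemma CD_dtilde2_shift :
  CD M d b c * dtilde2 M d 0 b c = CD M d (b + 1) c * \prod_(l < M) raise_coef l.
Proof.
have CD_shift : CD M d b c = CD M d (b + 1) c * \prod_(k < M) ((b + k%:R) / b).
  rewrite /CD -big_split; apply: eq_bigr => k _; rewrite -prod_shift_ratio // -big_split.
  by apply: eq_bigr => j _ /=; field; rewrite !gt_eqF ?addr_nat_gt0.
rewrite CD_shift -mulrA; congr (_ * _); rewrite /dtilde2 -big_split; apply: eq_bigr => j _.
by rewrite /= /raise_coef; field; rewrite !gt_eqF ?addr_nat_gt0.
Qed.

Lemma XiD_casmx (b' : R) y : XiD M d y b' c = (CD M d b' c)^-1 * \det (casmx M (xi_fam b') y).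
Proof. by []. Qed.

Lemma PDn_casmx n (b' : R) y : PDn M d n y b' c
  = (CDn M d n b' c)^-1 * powR c (- y) * \det (casmx M.+1 (meixner_fam n b') y).
Proof. by []. Qed.

Lemma det_casmx_xi (b' : R) y : 0 < b' ->
  \det (casmx M (xi_fam b') y) = CD M d b' c * XiD M d y b' c.
Proof. by move=> b'_gt0; rewrite XiD_casmx mulVKf ?gt_eqF ?CD_gt0. Qed.

Lemma det_casmx_meixner n (b' : R) y : 0 < b' ->
  \det (casmx M.+1 (meixner_fam n b') y) = CDn M d n b' c * powR c y * PDn M d n y b' c.
Proof.
move=> b'_gt0; rewrite PDn_casmx powRN.
by field; rewrite powR_neq0 CDn_neq0.
Qed.

Lemma det_casmx_meixner0 y :
  \det (casmx M.+1 (meixner_fam 0 b) y) = CDn M d 0 b c * powR c y * XiD M d y (b + 1) c.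
Proof.
have Pm0 z : Pm 0 z b c = 1 by rewrite PmE hgeom0.
rewrite (@det_casmx_geom _ _ _ c) => [|z]; last first.
  by rewrite /meixner_fam ltnn !Pm0 !mulr1 powR_addr1 mulrC.
have -> : casmx M (fun l z => meixner_fam 0 b l (z + 1) - c * meixner_fam 0 b l z) y
          = casmx M (fun l z => raise_coef l * xi_fam (b + 1) l z) y.
  by apply: eq_casmx => l lt_lM z; rewrite /meixner_fam lt_lM xiv_raise.
rewrite det_casmx_scale det_casmx_xi // /CDn -(mulrA _ (CD _ _ _ _)) CD_dtilde2_shift.
by rewrite /meixner_fam ltnn Pm0 mulr1; ring.
Qed.

Lemma det_casmx_ext_fam n y : \det (casmx M.+2 (ext_fam n.+1) y)
  = (1 - c) * n.+1%:R / (b + M%:R) * (CDn M d 0 b c * CDn M d n.+1 b c / CD M d b c)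
    * powR c y ^+ 2 * PDn M d n y (b + 1) c.
Proof.
rewrite (@det_casmx_geom _ _ _ c) => [|z]; last by rewrite /ext_fam ltnn powR_addr1 mulrC.
pose kappa l := if (l < M)%N then raise_coef l else (c - 1) * n.+1%:R / b.
have -> : casmx M.+1 (fun l z => ext_fam n.+1 l (z + 1) - c * ext_fam n.+1 l z) y
          = casmx M.+1 (fun l z => kappa l * meixner_fam n (b + 1) l z) y.
  apply: eq_casmx => l; rewrite ltnS leq_eqVlt => /orP [/eqP -> | lt_lM] z.
    by rewrite /ext_fam /kappa /meixner_fam leqnn ltnn powR_Pm_raise.
  by rewrite /ext_fam /kappa /meixner_fam (ltnW lt_lM) lt_lM xiv_raise.
have prod_kappa : \prod_(l < M.+1) kappa l
    = CD M d b c * dtilde2 M d 0 b c / CD M d (b + 1) c * ((c - 1) * n.+1%:R / b).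
  rewrite CD_dtilde2_shift [_ / CD _ _ _ _]mulrC mulKf ?gt_eqF ?CD_gt0 //.
  rewrite big_ord_recr /= {2}/kappa ltnn; congr (_ * _).
  by apply: eq_bigr => l _; rewrite /kappa ltn_ord.
rewrite det_casmx_scale prod_kappa det_casmx_meixner // /ext_fam ltnn /CDn dtilde2_shift.
by rewrite exprS; field; rewrite !gt_eqF ?addr_nat_gt0 ?CD_gt0.
Qed.

Lemma ext_eigen_gap n : ext_eigen n M.+1 - ext_eigen n M = n%:R * (1 - c).
Proof. by rewrite /ext_eigen ltnn eqxx ltnNge leqnSn (gtn_eqF (ltnSn M)) /=; ring. Qed.

Lemma PDn0 x : PDn M d 0 x b c = XiD M d x (b + 1) c.
Proof. by rewrite PDn_casmx det_casmx_meixner0 powRN; field; rewrite powR_neq0 CDn_neq0. Qed.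

Lemma PDn_forward n x : XiD M d (x + 1) b c != 0 ->
  c * (b + M%:R) / XiD M d (x + 1) b c *
    (XiD M d (x + 1) (b + 1) c * PDn M d n.+1 x b c
     - XiD M d x (b + 1) c * PDn M d n.+1 (x + 1) b c)
  = (1 - c) * n.+1%:R * PDn M d n x (b + 1) c.
Proof.
move=> X1_neq0; have := desnanot_jacobi_casmx M (ext_fam n.+1) x.
rewrite !casmx_ext_fam_bump !casmx_ext_famS casmx_ext_fam !det_casmx_meixner0.
rewrite !det_casmx_meixner // det_casmx_xi // det_casmx_ext_fam powR_addr1 => dj.
apply: (eq_of_subr_mul dj (k := (b + M%:R)
  / (XiD M d (x + 1) b c * CDn M d 0 b c * CDn M d n.+1 b c * powR c x ^+ 2))).
by field; rewrite X1_neq0 powR_neq0 !CDn_neq0 // !gt_eqF ?addr_nat_gt0 ?CD_gt0.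
Qed.

Lemma PDn_backward n x : (0 < M)%N -> XiD M d x (b + 1) c != 0 ->
  (c * (x + b + M%:R) * XiD M d x b c * PDn M d n x (b + 1) c
   - x * XiD M d (x + 1) b c * PDn M d n (x - 1) (b + 1) c)
  / (c * (b + M%:R) * XiD M d x (b + 1) c)
  = PDn M d n.+1 x b c.
Proof.
move=> M_gt0 Y0_neq0.
have := @casmx_diff_eq R M (ext_fam n.+1) (ext_eigen n.+1) b c x M_gt0 (ext_fam_diff_eq n.+1).
rewrite ext_eigen_gap casmx_ext_famS casmx_ext_fam_bump !casmx_ext_fam !det_casmx_ext_fam.
rewrite !det_casmx_xi // det_casmx_meixner // det_casmx_meixner0 powR_subr1 => diff_eq.
apply: (eq_of_subr_mul diff_eq (k := ((1 - c) * n.+1%:R * CDn M d 0 b c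
  * CDn M d n.+1 b c * powR c x ^+ 2 * XiD M d x (b + 1) c)^-1)).
by field; rewrite Y0_neq0 powR_neq0 !CDn_neq0 // !gt_eqF ?addr_nat_gt0 ?CD_gt0.
Qed.

End Meixner.

Theorem mainTheorem4 (R : realType) (beta c : R) (M : nat) (d : nat -> nat) :
  0 < beta -> 0 < c -> c < 1 -> (1 <= M)%N ->
  (forall i j : nat, (i < j)%N -> (j < M)%N -> (d i < d j)%N) ->
  (forall i : nat, (i < M)%N -> (0 < d i)%N) ->
  (forall x : R, PDn M d 0 x beta c = XiD M d x (beta + 1) c) /\
  (forall (n : nat) (x : R), (1 <= n)%N ->
     XiD M d (x + 1) beta c != 0 ->
     c * (beta + M%:R) / XiD M d (x + 1) beta c *
       (XiD M d (x + 1) (beta + 1) c * PDn M d n x beta c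
        - XiD M d x (beta + 1) c * PDn M d n (x + 1) beta c)
     = (1 - c) * n%:R * PDn M d n.-1 x (beta + 1) c) /\
  (forall (n : nat) (x : R), (1 <= n)%N ->
     XiD M d x (beta + 1) c != 0 ->
     (c * (x + beta + M%:R) * XiD M d x beta c * PDn M d n.-1 x (beta + 1) c
      - x * XiD M d (x + 1) beta c * PDn M d n.-1 (x - 1) (beta + 1) c)
     / (c * (beta + M%:R) * XiD M d x (beta + 1) c)
     = PDn M d n x beta c).
Proof.
move=> beta_gt0 c_gt0 c_lt1 M_gt0 d_incr _.
split; first exact: PDn0.
by split=> -[|n] x // _ Xi_neq0; [apply: PDn_forward | apply: PDn_backward].
Qed.
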